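(* Let $\mathbbm{k}$ be a field of characteristic $0$, $N \geqslant 2$, and let $f: \mathbb{N} \to \mathbb{Q}$ be any function. Suppose that for every $d \geqslant 0$, the defining ideal $I$ of a general set of $\binom{d+N}{N}$ points in $\mathbb{P}^N_{\mathbbm{k}}$ satisfies $\alpha(I^{(m)})/m \geqslant f(\alpha(I))$ for all $m \in \mathbb{N}$. Then for every $s \geqslant 1$, the defining ideal $I$ of a general set of $s$ points in $\mathbb{P}^N_{\mathbbm{k}}$ satisfies $\alpha(I^{(m)})/m \geqslant f(\alpha(I))$ for all $m \in \mathbb{N}$.
   Context: $\alpha(J)$ is the least degree of a nonzero homogeneous element of a homogeneous ideal $J$. For the ideal $I$ of points with point ideals $\mathfrak{p}_1,\dots,\mathfrak{p}_s$, $I^{(m)} = \bigcap_i \mathfrak{p}_i^m$. A property holds for a general set of $s$ points in $\mathbb{P}^N_{\mathbbm{k}}$ if there is a nonempty Zariski open subset $U$ of the parameter space of $s$ points (e.g. of $\mathbb{A}^{s(N+1)}_{\mathbbm{k}}$, with $\mathbf{a}=(a_{ij})$ giving the points $[a_{i0}:\dots:a_{iN}]$) such that the property holds for every set of points corresponding to a point of $U$. *)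

From HB Require Import structures.
From mathcomp Require Import all_boot all_order all_algebra.
From mathcomp Require Import mpoly.
From Stdlib Require Import ClassicalEpsilon.
Set Implicit Arguments. Unset Strict Implicit. Unset Printing Implicit Defensive.
Import Order.TTheory GRing.Theory Num.Theory.
Local Open Scope ring_scope.

Section Ideals.
Variable R : comNzRingType.

Definition ideal_gen (G : R -> Prop) : R -> Prop :=
  fun F => exists s : seq (R * R),
    (forall x, x \in s -> G x.2) /\ F = \sum_(x <- s) x.1 * x.2.

Definition prods (G : R -> Prop) (m : nat) : R -> Prop :=
  fun F => exists s : seq R,
    size s = m /\ (forall g, g \in s -> G g) /\ F = \prod_(g <- s) g.

Definition ideal_pow (G : R -> Prop) (m : nat) : R -> Prop :=
  ideal_gen (prods G m).
End Ideals.

Section Points.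
Variables (k : fieldType) (N : nat).
Local Notation S := {mpoly k[N.+1]}.

Definition lin_van (a : 'I_N.+1 -> k) : S -> Prop :=
  fun l => l \is 1.-homog /\ l.@[a] = 0.

Definition point_ideal (a : 'I_N.+1 -> k) : S -> Prop :=
  ideal_gen (lin_van a).

Definition point_ideal_pow (a : 'I_N.+1 -> k) (m : nat) : S -> Prop :=
  ideal_pow (lin_van a) m.

Definition pts_ideal (s : nat) (pts : 'I_s -> 'I_N.+1 -> k) : S -> Prop :=
  fun F => forall i, point_ideal (pts i) F.

(* Symbolic power I^(m) = \bigcap_i p_i^m. *)
Definition symb_pow (s : nat) (pts : 'I_s -> 'I_N.+1 -> k) (m : nat)
  : S -> Prop :=
  fun F => forall i, point_ideal_pow (pts i) m F.

Definition has_deg (J : S -> Prop) (d : nat) : Prop :=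
  exists F, J F /\ F != 0 /\ F \is d.-homog.

Definition has_degb (J : S -> Prop) (d : nat) : bool :=
  if excluded_middle_informative (has_deg J d) then true else false.

(* alpha(J): least degree of a nonzero homogeneous element of J
   (set to 0 if there is none, which never happens for the ideals below). *)
Definition alpha (J : S -> Prop) : nat :=
  match excluded_middle_informative (exists d, has_degb J d) with
  | left h => ex_minn h
  | right _ => 0%N
  end.
End Points.

Section General.
Variables (k : fieldType) (s N : nat).

(* The i-th point of the configuration given by a parameter
   a in A^{s(N+1)}: [a_{i0} : ... : a_{iN}]. *)
Definition pt_of (a : 'I_(s * N.+1) -> k) (i : 'I_s) : 'I_N.+1 -> k :=
  fun j => a (mxvec_index i j).

(* Zariski open subset of A^{s(N+1)}: complement of the zero locus
   of a set Z of polynomials. *)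
Definition in_open (Z : {mpoly k[s * N.+1]} -> Prop)
  (a : 'I_(s * N.+1) -> k) : Prop :=
  exists g, Z g /\ g.@[a] != 0.

Definition general_pts (P : ('I_s -> 'I_N.+1 -> k) -> Prop) : Prop :=
  exists Z : {mpoly k[s * N.+1]} -> Prop,
    (exists a, in_open Z a) /\
    forall a, in_open Z a -> (forall i, exists j, pt_of a i j != 0) -> P (pt_of a).
End General.

Definition waldschmidt_bound (k : fieldType) (N : nat) (f : nat -> rat)
  (s : nat) (pts : 'I_s -> 'I_N.+1 -> k) : Prop :=
  forall m : nat, (0 < m)%N ->
    f (alpha (pts_ideal pts)) <= (alpha (symb_pow pts m))%:R / m%:R.

From HB Require Import structures.
From mathcomp Require Import all_boot all_order all_algebra.
From mathcomp Require Import mpoly ring.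
From Stdlib Require Import ClassicalEpsilon.
Set Implicit Arguments. Unset Strict Implicit. Unset Printing Implicit Defensive.
Import Order.TTheory GRing.Theory Num.Theory.
Local Open Scope ring_scope.

(* Pick [d] with [C(d+N,N) <= s < C(d+1+N,N)] and let [I'] be the ideal of the
   first [t = C(d+N,N)] of the [s] points.  For general points the first [t]
   impose independent conditions on forms of degree [d] (an interpolation
   determinant does not vanish), so no form of degree [<= d] lies in [I' ⊇ I],
   while any [s < C(d+1+N,N)] points lie on a form of degree [d+1].  Hence
   [alpha(I) = alpha(I') = d+1], and [I^(m) ⊆ I'^(m)] gives
   [alpha(I^(m))/m >= alpha(I'^(m))/m >= f(d+1)] by the hypothesis for [t]
   points.  The open set is cut out by the determinant times the pullback of a
   polynomial defining the open set for [t] points; it is nonempty because in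
   characteristic 0 a nonzero polynomial does not vanish everywhere. *)

Section IdealGen.
Variable R : comNzRingType.
Implicit Types (G : R -> Prop) (x y u w : R).

Lemma ideal_gen0 G : ideal_gen G 0.
Proof. by exists [::]; split => //; rewrite big_nil. Qed.

Lemma ideal_genD G x y : ideal_gen G x -> ideal_gen G y -> ideal_gen G (x + y).
Proof.
move=> [s [Hs ->]] [t [Ht ->]]; exists (s ++ t); split; last by rewrite big_cat.
by move=> z; rewrite mem_cat => /orP[/Hs|/Ht].
Qed.

Lemma ideal_genMl G c x : ideal_gen G x -> ideal_gen G (c * x).
Proof.
move=> [s [Hs ->]]; exists [seq (c * z.1, z.2) | z <- s]; split.
  by move=> z /mapP[w /Hs ? ->].
by rewrite big_map mulr_sumr; apply: eq_bigr => z _; rewrite mulrA.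
Qed.

Lemma ideal_gen_generator G c g : G g -> ideal_gen G (c * g).
Proof.
move=> Gg; exists [:: (c, g)]; split; last by rewrite big_seq1.
by move=> z; rewrite inE => /eqP ->.
Qed.

Lemma ideal_gen_sum G I (r : seq I) (F : I -> R) :
  (forall i, ideal_gen G (F i)) -> ideal_gen G (\sum_(i <- r) F i).
Proof. by move=> GF; apply: big_ind => //; [apply: ideal_gen0 | apply: ideal_genD]. Qed.

Lemma sub_ideal_gen G G' x :
  (forall g, G g -> G' g) -> ideal_gen G x -> ideal_gen G' x.
Proof. by move=> GG' [s [Hs ->]]; exists s; split => // z /Hs /GG'. Qed.

Lemma sub_prods G G' m x :
  (forall g, G g -> G' g) -> prods G m x -> prods G' m x.
Proof. by move=> GG' [s [? [Hs ->]]]; exists s; split=> //; split=> // g /Hs /GG'. Qed.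

Lemma ideal_gen_congrM G u u' w w' :
  ideal_gen G (u - u') -> ideal_gen G (w - w') -> ideal_gen G (u * w - u' * w').
Proof.
move=> Gu Gw; have -> : u * w - u' * w' = w * (u - u') + u' * (w - w').
  by rewrite !mulrBr [w * _]mulrC [w * u']mulrC addrA subrK.
by apply: ideal_genD; apply: ideal_genMl.
Qed.

Lemma ideal_gen_congr_prod G I (r : seq I) (F F' : I -> R) :
  (forall i, ideal_gen G (F i - F' i)) ->
  ideal_gen G (\prod_(i <- r) F i - \prod_(i <- r) F' i).
Proof.
move=> GF; apply: (big_ind2 (fun a b => ideal_gen G (a - b))) => //.
  by rewrite subrr; apply: ideal_gen0.
by move=> *; apply: ideal_gen_congrM.
Qed.

Lemma ideal_gen_congrX G u w e :
  ideal_gen G (u - w) -> ideal_gen G (u ^+ e - w ^+ e).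
Proof. by move=> Guw; rewrite subrXX mulrC; apply: ideal_genMl. Qed.

End IdealGen.

Section PointIdeal.
Variables (k : fieldType) (N : nat).
Implicit Types (a : 'I_N.+1 -> k) (F : {mpoly k[N.+1]}).

Lemma ideal_gen_eval_eq0 n (G : {mpoly k[n]} -> Prop) v p :
  (forall g, G g -> g.@[v] = 0) -> ideal_gen G p -> p.@[v] = 0.
Proof.
move=> Gv [s [Hs ->]]; rewrite rmorph_sum big_seq big1 // => z zs.
by rewrite rmorphM /= (Gv z.2) ?mulr0 //; apply: Hs.
Qed.

Lemma point_ideal_eval_eq0 a F : point_ideal a F -> F.@[a] = 0.
Proof. by apply: ideal_gen_eval_eq0 => g []. Qed.

Lemma lin_van_cross a i j : lin_van a (a j *: 'X_i - a i *: 'X_j).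
Proof.
split; first by apply: rpredB; apply: rpredZ; rewrite dhomogX /= mdeg1.
by rewrite mevalB !mevalZ !mevalXU mulrC subrr.
Qed.

Lemma point_ideal_monomial_congr a j (m : 'X_{1..N.+1}) :
  point_ideal a ('X_[m] * (a j ^+ mdeg m)%:MP -
                 (\prod_(i < N.+1) a i ^+ m i)%:MP * 'X_j ^+ mdeg m).
Proof.
have cross i : point_ideal a ('X_i * (a j)%:MP - (a i)%:MP * 'X_j).
  rewrite -[_ - _]mul1r; apply: ideal_gen_generator.
  by rewrite mulrC !mul_mpolyC; apply: lin_van_cross.
have := ideal_gen_congr_prod (index_enum 'I_N.+1) (fun i => ideal_gen_congrX (m i) (cross i)).
congr ideal_gen; congr (_ - _).
  under eq_bigr do rewrite exprMn.
  by rewrite big_split /= -mpolyXE_id prodrXr -rmorphXn /= mdegE.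
under eq_bigr do rewrite exprMn -rmorphXn.
by rewrite big_split /= prodrXr -rmorph_prod mdegE.
Qed.

(* Modulo the ideal of [a], [a_j X_i = a_i X_j], hence [a_j^D F = F(a) X_j^D]. *)
Lemma point_ideal_of_homog_vanish a j D F :
  a j != 0 -> F \is D.-homog -> F.@[a] = 0 -> point_ideal a F.
Proof.
move=> aj0 F_homog Fa.
have scaledF : (a j ^+ D)%:MP * F - F.@[a]%:MP * 'X_j ^+ D =
    \sum_(m <- msupp F) (F@_m)%:MP *
      ('X_[m] * (a j ^+ mdeg m)%:MP -
       (\prod_(i < N.+1) a i ^+ m i)%:MP * 'X_j ^+ mdeg m).
  rewrite {1}[F]mpolyE mevalE mulr_sumr rmorph_sum mulr_suml -sumrB.
  rewrite !big_seq; apply: eq_bigr => m /(dhomog_mf F_homog) <-.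
  by rewrite -mul_mpolyC rmorphM /=; ring.
have : point_ideal a ((a j ^- D)%:MP * ((a j ^+ D)%:MP * F)).
  apply: ideal_genMl; move: scaledF; rewrite Fa mul0r subr0 => ->.
  by apply: ideal_gen_sum => m; apply/ideal_genMl/point_ideal_monomial_congr.
by rewrite mulrA -rmorphM /= mulVf ?expf_neq0 // mul1r.
Qed.

End PointIdeal.

Lemma widen_ord_lift_max n (i : 'I_n) : widen_ord (leqnSn n) i = lift ord_max i.
Proof. by apply: val_inj => /=; rewrite /bump leqNgt ltn_ord. Qed.

Lemma mnm_widen_max_inj n (m m' : 'X_{1..n.+1}) :
  (forall i : 'I_n, m (widen_ord (leqnSn n) i) = m' (widen_ord (leqnSn n) i)) ->
  m ord_max = m' ord_max -> m = m'.
Proof.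
move=> eq_widen eq_max; apply/mnmP => i.
by case: (unliftP ord_max i) => [j ->|->] //; rewrite -widen_ord_lift_max.
Qed.

Section Nonvanishing.
Variable k : fieldType.

Lemma meval_muni n (p : {mpoly k[n.+1]}) (v : 'I_n.+1 -> k) :
  p.@[v] = (map_poly (meval (v \o widen_ord (leqnSn n))) (muni p)).[v ord_max].
Proof.
rewrite muniE mevalE rmorph_sum horner_sum; apply: eq_bigr => m _.
rewrite -mul_polyC rmorphM /= map_polyC map_polyXn hornerM hornerC hornerXn.
rewrite /= linearZ /= mevalX big_ord_recr /= mulrA; congr (_ * _ * _).
by apply: eq_bigr => i _; rewrite mnmE.
Qed.

Lemma muni_eq0 n (p : {mpoly k[n.+1]}) : (muni p == 0) = (p == 0).
Proof.
apply/idP/idP => [/eqP p0|/eqP ->]; last by rewrite muni0.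
apply/eqP/mpolyP => m; rewrite mcoeff0; apply/eqP; apply: contraT => pm.
have : ((muni p)`_(m ord_max))@_[multinom m (widen_ord (leqnSn n) i) | i < n]
       = p@_m.
  rewrite muniE coef_sum raddf_sum /= (bigD1_seq m) ?msupp_uniq ?mcoeff_msupp //=.
  rewrite coefZ coefXn eqxx mulr1 mcoeffZ mcoeffX eqxx mulr1 big1 ?addr0 //.
  move=> m' m'm; rewrite coefZ coefXn.
  case: eqP => [eq_max|]; last by rewrite mulr0 mcoeff0.
  rewrite mulr1 mcoeffZ mcoeffX; case: eqP => [eq_widen|]; last by rewrite mulr0.
  case/eqP: m'm; apply: mnm_widen_max_inj => // i.
  by move/mnmP: eq_widen => /(_ i); rewrite !mnmE.
by rewrite p0 coef0 mcoeff0 => /esym/eqP; rewrite (negbTE pm).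
Qed.

Hypothesis char0 : [pchar k] =i pred0.

Lemma char0_natr_inj : injective (fun n : nat => n%:R : k).
Proof.
have le_inj i j : (i <= j)%N -> (i%:R : k) = j%:R -> i = j.
  move=> le_ij /eqP; rewrite eq_sym -subr_eq0 -natrB // ((pcharf0P k).1 char0).
  by rewrite subn_eq0 => le_ji; apply/eqP; rewrite eqn_leq le_ij.
by move=> i j eq_ij; case: (leqP i j) => [/le_inj -> //|/ltnW/le_inj ->].
Qed.

Lemma poly_exists_nonroot (r : {poly k}) : r != 0 -> exists x, ~~ root r x.
Proof.
move=> r0; set xs := [seq (i%:R : k) | i <- iota 0 (size r)].
have xs_uniq : uniq xs by rewrite map_inj_uniq ?iota_uniq //; apply: char0_natr_inj.
case/boolP: (all (root r) xs) => [xs_roots|/allPn[x _ rx]]; last by exists x.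
by have := max_poly_roots r0 xs_roots xs_uniq; rewrite size_map size_iota ltnn.
Qed.

(* Induct on [n]: choose the first [n] coordinates so that the leading
   coefficient of [p] in the last variable survives, then the last one. *)
Lemma mpoly_exists_nonroot n (p : {mpoly k[n]}) : p != 0 -> exists v, p.@[v] != 0.
Proof.
elim: n p => [|n IHn] p p0.
  have pC : p = (p@_0%MM)%:MP.
    by apply/mpolyP => m; rewrite mcoeffC (_ : m = 0%MM) ?eqxx ?mulr1 //; apply/mnmP => -[].
  by exists (fun _ => 0); rewrite pC mevalC; apply: contra p0 => /eqP c0; rewrite pC c0.
have [v' lc_v'] : exists v', (lead_coef (muni p)).@[v'] != 0.
  by apply: IHn; rewrite lead_coef_eq0 muni_eq0.
set r := map_poly (meval v') (muni p).
have r0 : r != 0.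
  apply/eqP => /(congr1 (fun q : {poly k} => q`_(size (muni p)).-1)).
  by rewrite coef_map coef0 /= => /eqP; apply/negP.
have [x rx] := poly_exists_nonroot r0.
exists (fun i => if unlift ord_max i is Some j then v' j else x).
rewrite meval_muni unlift_none (eq_map_poly (g := meval v')) //.
by move=> q; apply: meval_eq => i /=; rewrite widen_ord_lift_max liftK.
Qed.

End Nonvanishing.

Section Alpha.
Variables (k : fieldType) (N : nat).
Implicit Types (J : {mpoly k[N.+1]} -> Prop) (d : nat).

Lemma has_degbP J d : has_degb J d <-> has_deg J d.
Proof. by rewrite /has_degb; case: excluded_middle_informative. Qed.

Lemma alpha_le J d : has_deg J d -> (alpha J <= d)%N.
Proof.
move=> Jd; rewrite /alpha; case: excluded_middle_informative => [ex|[]].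
  by case: ex_minnP => e _; apply; apply/has_degbP.
by exists d; apply/has_degbP.
Qed.

Lemma has_deg_alpha J d : has_deg J d -> has_deg J (alpha J).
Proof.
move=> Jd; rewrite /alpha; case: excluded_middle_informative => [ex|[]].
  by case: ex_minnP => e /has_degbP.
by exists d; apply/has_degbP.
Qed.

Lemma alpha_sub J J' d :
  (forall F, J F -> J' F) -> has_deg J d -> (alpha J' <= alpha J)%N.
Proof.
move=> JJ' /has_deg_alpha [F [JF F_homog]].
by apply: alpha_le; exists F; split => //; apply: JJ'.
Qed.

Lemma alpha_eq J d :
  has_deg J d -> (forall e, has_deg J e -> (d <= e)%N) -> alpha J = d.
Proof.
move=> Jd d_min; apply/eqP; rewrite eqn_leq alpha_le //=.
exact/d_min/(has_deg_alpha Jd).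
Qed.

End Alpha.

Section Configurations.
Variables (k : fieldType) (N : nat).
Implicit Types (a b : 'I_N.+1 -> k) (s t : nat).

Lemma lin_van_eq a b l : a =1 b -> lin_van a l -> lin_van b l.
Proof. by move=> ab [l_homog la]; split => //; rewrite -(meval_eq _ ab). Qed.

Lemma pts_ideal_restrict s t (pts : 'I_s -> 'I_N.+1 -> k) (pts' : 'I_t -> 'I_N.+1 -> k)
    (w : 'I_t -> 'I_s) F :
  (forall i, pts' i =1 pts (w i)) -> pts_ideal pts F -> pts_ideal pts' F.
Proof.
move=> pts'E IF i; apply: sub_ideal_gen (IF (w i)) => l.
by apply: lin_van_eq => j; rewrite pts'E.
Qed.

Lemma symb_pow_restrict s t (pts : 'I_s -> 'I_N.+1 -> k) (pts' : 'I_t -> 'I_N.+1 -> k)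
    (w : 'I_t -> 'I_s) m F :
  (forall i, pts' i =1 pts (w i)) -> symb_pow pts m F -> symb_pow pts' m F.
Proof.
move=> pts'E IF i; apply: sub_ideal_gen (IF (w i)) => g; apply: sub_prods => l.
by apply: lin_van_eq => j; rewrite pts'E.
Qed.

Hypothesis N_gt0 : (0 < N)%N.

Lemma exists_lin_van a : (exists j, a j != 0) ->
  exists l, lin_van a l /\ l != 0 /\ l \is 1.-homog.
Proof.
move=> [j aj0]; pose i : 'I_N.+1 := if j == ord0 then ord_max else ord0.
have ij : i != j.
  rewrite /i; case: (j =P ord0) => [->|/eqP]; last by rewrite eq_sym.
  by rewrite -val_eqE /= -lt0n.
exists (a j *: 'X_i - a i *: 'X_j); have [l_homog la] := lin_van_cross a i j.
do 2!split => //; apply/eqP => /(congr1 (mcoeff U_(i))).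
rewrite mcoeffB !mcoeffZ !mcoeffXU eqxx eq_sym (negbTE ij) mulr0 mulr1 subr0.
by rewrite mcoeff0; apply/eqP.
Qed.

Lemma symb_pow_has_deg s (pts : 'I_s -> 'I_N.+1 -> k) m :
  (forall i, exists j, pts i j != 0) -> exists d, has_deg (symb_pow pts m) d.
Proof.
move=> pts_nz.
have /fin_all_exists[L L_van] := fun i => exists_lin_van (pts_nz i).
exists (\sum_(i < s) m)%N, (\prod_(i < s) L i ^+ m); split; last split.
- move=> i0; rewrite (bigD1 i0) //= mulrC; apply: ideal_gen_generator.
  exists (nseq m (L i0)); split; first by rewrite size_nseq.
  split; last by rewrite big_nseq iter_mulr_1.
  by move=> g /nseqP[-> _]; case: (L_van i0).
- by apply/prodf_neq0 => i _; apply: expf_neq0; case: (L_van i) => _ [].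
- apply: (big_ind2 (fun p d => p \is d.-homog)) => [|p d q e|i _].
  + exact: dhomog1.
  + exact: dhomogM.
  + by case: (L_van i) => _ [_ /(dhomogMn m)]; rewrite mul1n.
Qed.

End Configurations.

Section ParamOf.
Variables (T : Type) (N r : nat).

Definition param_of (q : 'I_r -> 'I_N.+1 -> T) : 'I_(r * N.+1) -> T :=
  mxvec (\matrix_(i, l) q i l) 0.

Lemma param_ofE q i l : param_of q (mxvec_index i l) = q i l.
Proof. by rewrite /param_of mxvecE mxE. Qed.

End ParamOf.

Lemma pt_of_param (k : fieldType) N r (q : 'I_r -> 'I_N.+1 -> k) i :
  pt_of (param_of q) i =1 q i.
Proof. by move=> l; rewrite /pt_of param_ofE. Qed.

Lemma exists_row_ker (k : fieldType) m n (A : 'M[k]_(m, n)) : (\rank A < n)%N ->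
  exists u : 'rV_n, u != 0 /\ A *m u^T = 0.
Proof.
move=> rankA; have ker0 : kermx A^T != 0.
  by rewrite -mxrank_eq0 mxrank_ker mxrank_tr -lt0n subn_gt0.
have [i keri] : exists i, row i (kermx A^T) != 0.
  apply/existsP; apply: contraR ker0 => /existsPn ker0.
  by apply/eqP/row_matrixP => i; rewrite row0; apply/eqP/negbNE.
exists (row i (kermx A^T)); split => //.
by apply: trmx_inj; rewrite trmx_mul trmxK trmx0 -row_mul mulmx_ker row0.
Qed.

Import VectorInternalTheory.

Section Forms.
Variables (k : fieldType) (N d : nat).
Local Notation V := (dhomog N.+1 k d).

Definition form_of_row (x : 'rV_(dim V)) : {mpoly k[N.+1]} :=
  mpoly_of_dhomog (r2v x : V).

Definition form_basis (j : 'I_(dim V)) := form_of_row (delta_mx 0 j).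

Definition eval_mx r (q : 'I_r -> 'I_N.+1 -> k) : 'M[k]_(r, dim V) :=
  \matrix_(i, j) (form_basis j).@[q i].

Lemma form_of_rowE x : form_of_row x = \sum_j x 0 j *: form_basis j.
Proof.
rewrite /form_basis /form_of_row {1}[x]row_sum_delta !linear_sum /=.
by apply: eq_bigr => j _; rewrite !linearZ.
Qed.

Lemma form_of_row_homog x : form_of_row x \is d.-homog.
Proof. exact: dhomog_is_dhomog. Qed.

Lemma form_of_row_eq0 x : (form_of_row x == 0) = (x == 0).
Proof.
apply/eqP/eqP => [x0|->]; last by rewrite /form_of_row linear0.
have : (r2v x : V) = 0 by apply: val_inj; rewrite /= -/(form_of_row x) x0.
by move/(congr1 v2r); rewrite r2vK linear0.
Qed.

Lemma homog_form_of_row F : F \is d.-homog -> exists x, F = form_of_row x.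
Proof. by move=> F_homog; exists (v2r (DHomog F_homog)); rewrite /form_of_row v2rK. Qed.

Lemma mul_eval_mx_tr r (q : 'I_r -> 'I_N.+1 -> k) x i :
  (eval_mx q *m x^T) i 0 = (form_of_row x).@[q i].
Proof.
rewrite mxE form_of_rowE rmorph_sum; apply: eq_bigr => j _.
by rewrite !mxE /= mevalZ mulrC.
Qed.

Lemma exists_form_vanishing s (pts : 'I_s -> 'I_N.+1 -> k) : (s < dim V)%N ->
  exists F, F != 0 /\ F \is d.-homog /\ forall i, F.@[pts i] = 0.
Proof.
move=> s_lt; have [|u [u0 pts_u]] := @exists_row_ker _ _ _ (eval_mx pts).
  exact: leq_ltn_trans (rank_leq_row _) s_lt.
exists (form_of_row u); rewrite form_of_row_eq0 form_of_row_homog; do 2!split => //.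
by move=> i; rewrite -mul_eval_mx_tr pts_u mxE.
Qed.

Lemma unit_eval_mx_form_eq0 (q : 'I_(dim V) -> 'I_N.+1 -> k) F :
  eval_mx q \in unitmx -> F \is d.-homog -> (forall i, F.@[q i] = 0) -> F = 0.
Proof.
move=> q_unit /homog_form_of_row[x ->] q_van; apply/eqP; rewrite form_of_row_eq0.
have qx0 : eval_mx q *m x^T = 0.
  by apply/matrixP => i j; rewrite ord1 mul_eval_mx_tr q_van mxE.
by rewrite -trmx_eq0 -(mulKmx q_unit x^T) qx0 mulmx0.
Qed.

Hypothesis char0 : [pchar k] =i pred0.

(* A point off a nonzero form of the kernel raises the rank by one. *)
Lemma exists_eval_mx_rank r : (r <= dim V)%N ->
  exists q : 'I_r -> 'I_N.+1 -> k, \rank (eval_mx q) = r.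
Proof.
elim: r => [|r IHr] r_le.
  by exists (fun _ _ => 0); apply/eqP; rewrite -leqn0 rank_leq_row.
have [q rank_q] := IHr (ltnW r_le).
have [|u [u0 qu]] := exists_row_ker (A := eval_mx q); first by rewrite rank_q.
have [p up] : exists p, (form_of_row u).@[p] != 0.
  by apply: (mpoly_exists_nonroot char0); rewrite form_of_row_eq0.
pose q' (i : 'I_r.+1) := if unlift ord0 i is Some j then q j else p.
exists q'; apply/eqP; rewrite eqn_leq rank_leq_row /=.
have q_sub : (eval_mx q <= eval_mx q')%MS.
  apply/row_subP => i; rewrite (_ : row i _ = row (lift ord0 i) (eval_mx q')).
    exact: row_sub.
  by apply/rowP => j; rewrite !mxE /q' liftK.
have p_notin : ~~ (row ord0 (eval_mx q') <= eval_mx q)%MS.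
  apply: contra up => /submxP[w pw].
  have : row ord0 (eval_mx q' *m u^T) = 0 by rewrite row_mul pw -mulmxA qu mulmx0.
  move/rowP/(_ 0); rewrite [row _ _ _ _]mxE mul_eval_mx_tr mxE => /eqP.
  by rewrite /q' unlift_none.
set Q := (eval_mx q + row ord0 (eval_mx q'))%MS.
have rank_lt : (\rank (eval_mx q) < \rank Q)%N.
  have [le_rank eq_rank] := mxrank_leqif_sup (addsmxSl (eval_mx q) (row ord0 (eval_mx q'))).
  rewrite ltn_neqAle le_rank andbT eq_rank.
  by apply: contra p_notin => Q_sub; exact: submx_trans (addsmxSr _ _) Q_sub.
have rank_le : (\rank Q <= \rank (eval_mx q'))%N.
  by apply: mxrankS; rewrite addsmx_sub q_sub row_sub.
by move: (leq_trans rank_lt rank_le); rewrite rank_q.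
Qed.

Lemma exists_unit_eval_mx :
  exists q : 'I_(dim V) -> 'I_N.+1 -> k, eval_mx q \in unitmx.
Proof.
have [q rank_q] := exists_eval_mx_rank (leqnn _).
by exists q; rewrite -row_free_unit /row_free rank_q.
Qed.

Definition gen_eval_det : {mpoly k[dim V * N.+1]} :=
  \det (\matrix_(i, j) (form_basis j \mPo [tuple 'X_(mxvec_index i l) | l < N.+1])).

Lemma gen_eval_detE b : gen_eval_det.@[b] = \det (eval_mx (pt_of b)).
Proof.
rewrite -det_map_mx; congr (determinant _); apply/matrixP => i j.
rewrite !mxE /= comp_mpoly_meval; apply: meval_eq => l.
by rewrite tnth_mktuple mevalXU.
Qed.

Lemma gen_eval_det_neq0 : gen_eval_det != 0.
Proof.
have [q q_unit] := exists_unit_eval_mx; apply/eqP => /(congr1 (meval (param_of q))).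
rewrite gen_eval_detE meval0 (_ : eval_mx _ = eval_mx q).
  by apply/eqP; rewrite -unitfE -unitmxE.
by apply/matrixP => i j; rewrite !mxE; apply: meval_eq; apply: pt_of_param.
Qed.

End Forms.
Arguments eval_mx {k N d r} q.

Lemma dim_dhomog (k : fieldType) N d : dim (dhomog N.+1 k d) = 'C(d + N, N).
Proof.
change ('C(d + N, d) = 'C(d + N, N)).
by rewrite -[X in 'C(_, X) = _](addnK N d) bin_sub // leq_addl.
Qed.

Lemma ltn_bin_addl N d : (0 < N)%N -> (d < 'C(d + N, N))%N.
Proof.
move=> N_gt0; rewrite -[X in 'C(_, X)](addKn d N) bin_sub ?leq_addr //.
by rewrite -[X in (X <= _)%N]binSn leq_bin2l // -addn1 leq_add2l.
Qed.

Lemma exists_bin_bracket N s : (0 < N)%N -> (0 < s)%N ->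
  exists d, ('C(d + N, N) <= s < 'C(d.+1 + N, N))%N.
Proof.
move=> N_gt0 s_gt0.
have bin_le_s : exists d, ('C(d + N, N) <= s)%N by exists 0%N; rewrite add0n binn.
have bin_bound d : ('C(d + N, N) <= s)%N -> (d <= s)%N.
  by move/(leq_trans (ltn_bin_addl d N_gt0))/ltnW.
case: (ex_maxnP bin_le_s bin_bound) => d bin_d d_max.
by exists d; rewrite bin_d ltnNge /=; apply/negP => /d_max; rewrite ltnn.
Qed.

Section PointIdealDegree.
Variables (k : fieldType) (N : nat).

Lemma pts_ideal_has_deg e s (pts : 'I_s -> 'I_N.+1 -> k) :
  (s < dim (dhomog N.+1 k e))%N -> (forall i, exists j, pts i j != 0) ->
  has_deg (pts_ideal pts) e.
Proof.
move=> s_lt pts_nz; have [F [F0 [F_homog F_van]]] := exists_form_vanishing pts s_lt.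
exists F; split=> [i|]; last by split.
have [j pij] := pts_nz i.
exact: point_ideal_of_homog_vanish pij F_homog (F_van i).
Qed.

(* Multiplying by [X_0^(d-e)] lifts a form of degree [e <= d] to degree [d]. *)
Lemma unit_eval_mx_pts_ideal_deg d (q : 'I_(dim (dhomog N.+1 k d)) -> 'I_N.+1 -> k) e :
  eval_mx q \in unitmx -> has_deg (pts_ideal q) e -> (d < e)%N.
Proof.
move=> q_unit [F [IF [F0 F_homog]]]; rewrite ltnNge; apply/negP => le_ed.
have X0_homog : ('X_ord0 : {mpoly k[N.+1]}) \is 1.-homog by rewrite dhomogX /= mdeg1.
have X0_neq0 : ('X_ord0 : {mpoly k[N.+1]}) != 0.
  apply/eqP => /(congr1 (mcoeff U_(ord0))).
  by rewrite mcoeffXU eqxx mcoeff0 => /eqP; rewrite oner_eq0.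
have G_homog : 'X_ord0 ^+ (d - e) * F \is d.-homog.
  by have := dhomogM (dhomogMn (d - e) X0_homog) F_homog; rewrite mul1n subnK.
have /negP[] : 'X_ord0 ^+ (d - e) * F != 0 by rewrite mulf_neq0 ?expf_neq0.
apply/eqP/(unit_eval_mx_form_eq0 q_unit G_homog) => i.
by rewrite mevalM (point_ideal_eval_eq0 (IF i)) mulr0.
Qed.

End PointIdealDegree.

Section FirstPoints.
Variables (k : fieldType) (N d s : nat).
Local Notation t := (dim (dhomog N.+1 k d)).
Hypothesis t_le_s : (t <= s)%N.

Definition first_pt (i : 'I_t) : 'I_s := widen_ord t_le_s i.

Definition restrict_param (a : 'I_(s * N.+1) -> k) : 'I_(t * N.+1) -> k :=
  param_of (fun i => pt_of a (first_pt i)).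

Definition restrict_mpoly (g : {mpoly k[t * N.+1]}) : {mpoly k[s * N.+1]} :=
  g \mPo [tuple param_of (fun i l => 'X_(mxvec_index (first_pt i) l)) c | c < t * N.+1].

Definition extend_param (b : 'I_(t * N.+1) -> k) : 'I_(s * N.+1) -> k :=
  param_of (fun i : 'I_s => if insub (val i) is Some i' then pt_of b i' else fun=> 0).

Lemma pt_of_restrict a i : pt_of (restrict_param a) i =1 pt_of a (first_pt i).
Proof. exact: pt_of_param. Qed.

Lemma restrict_mpolyE g a : (restrict_mpoly g).@[a] = g.@[restrict_param a].
Proof.
rewrite comp_mpoly_meval; apply: meval_eq => c; rewrite tnth_mktuple.
by case/mxvec_indexP: c => i l; rewrite /restrict_param !param_ofE mevalXU.
Qed.

Lemma restrict_extend b : restrict_param (extend_param b) =1 b.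
Proof.
case/mxvec_indexP => i l; rewrite /restrict_param param_ofE /extend_param pt_of_param /=.
by rewrite insubT ?ltn_ord // => lt_it; congr (pt_of b _ l); apply: val_inj.
Qed.

Hypothesis N_gt0 : (0 < N)%N.
Hypothesis s_lt : (s < dim (dhomog N.+1 k d.+1))%N.
Variable a : 'I_(s * N.+1) -> k.
Hypothesis a_nz : forall i, exists j, pt_of a i j != 0.

Lemma alpha_symb_pow_restrict m :
  (alpha (symb_pow (pt_of (restrict_param a)) m) <= alpha (symb_pow (pt_of a) m))%N.
Proof.
have [e symb_e] := symb_pow_has_deg N_gt0 m a_nz.
by apply: alpha_sub symb_e => F; apply: symb_pow_restrict; apply: pt_of_restrict.
Qed.

Hypothesis a_det : (gen_eval_det k N d).@[restrict_param a] != 0.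

Lemma alpha_pts_ideal_restrict :
  alpha (pts_ideal (pt_of a)) = d.+1 /\
  alpha (pts_ideal (pt_of (restrict_param a))) = d.+1.
Proof.
have sub F : pts_ideal (pt_of a) F -> pts_ideal (pt_of (restrict_param a)) F.
  by apply: pts_ideal_restrict; apply: pt_of_restrict.
have [F [IF F_nz_homog]] := pts_ideal_has_deg s_lt a_nz.
have deg_gt e : has_deg (pts_ideal (pt_of (restrict_param a))) e -> (d < e)%N.
  by apply: unit_eval_mx_pts_ideal_deg; rewrite unitmxE unitfE -gen_eval_detE.
split; apply: alpha_eq.
- by exists F.
- by move=> e [G [/sub IG G_deg]]; apply: deg_gt; exists G.
- by exists F; split => //; apply: sub.
- exact: deg_gt.
Qed.

Lemma waldschmidt_bound_restrict f :
  waldschmidt_bound f (pt_of (restrict_param a)) -> waldschmidt_bound f (pt_of a).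
Proof.
move=> bound m m_gt0; have [-> alpha_restrict] := alpha_pts_ideal_restrict.
rewrite -alpha_restrict; apply: le_trans (bound m m_gt0) _.
by rewrite ler_wpM2r ?invr_ge0 ?ler0n // ler_nat alpha_symb_pow_restrict.
Qed.

End FirstPoints.

Theorem lemma5p6 (k : fieldType) (N : nat) (f : nat -> rat) :
  [pchar k] =i pred0 ->
  (2 <= N)%N ->
  (forall d : nat,
     general_pts (fun pts => waldschmidt_bound f pts)
       (s := 'C(d + N, N)) (N := N) (k := k)) ->
  forall s : nat, (1 <= s)%N ->
    general_pts (fun pts => waldschmidt_bound f pts) (s := s) (N := N) (k := k).
Proof.
move=> char0 N_ge2 bound_bin s s_gt0; have N_gt0 : (0 < N)%N by apply: ltnW.
have [d] := exists_bin_bracket N_gt0 s_gt0; rewrite -!(dim_dhomog k) => /andP[t_le_s s_lt].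
have [Z [[a0 [g [Zg ga0]]] Z_bound]] :
    general_pts (fun pts => waldschmidt_bound f pts) (s := dim (dhomog N.+1 k d)) (N := N) (k := k).
  by rewrite dim_dhomog; apply: bound_bin.
pose P := g * gen_eval_det k N d.
exists (fun h => h = restrict_mpoly t_le_s P); split.
  have [|b Pb] := mpoly_exists_nonroot char0 (p := P).
    by rewrite mulf_neq0 ?gen_eval_det_neq0 //; apply: contraNneq ga0 => ->; rewrite meval0.
  exists (extend_param b), (restrict_mpoly t_le_s P); split => //.
  by rewrite restrict_mpolyE (meval_eq _ (restrict_extend t_le_s b)).
move=> a [_ [-> Pa]] a_nz; move: Pa; rewrite restrict_mpolyE mevalM mulf_eq0 negb_or.
case/andP=> ga a_det; apply: (waldschmidt_bound_restrict N_gt0 s_lt a_nz a_det).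
apply: Z_bound => [|i]; first by exists g.
by have [j aj] := a_nz (first_pt t_le_s i); exists j; rewrite pt_of_restrict.
Qed.
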